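(* Let $L\ge2$ and let $S=(d,N_1,\dots,N_L)$ be a neural network architecture. Let $\varrho:\mathbb{R}\to\mathbb{R}$ be continuous and assume there is $x_0\in\mathbb{R}$ such that $\varrho$ is differentiable at $x_0$ with $\varrho'(x_0)\ne0$. Let $\Omega\subset\mathbb{R}^d$ have nonempty interior, and assume that $\mathcal{RNN}_\varrho^\Omega(S)$ does not contain infinitely many linearly independent functions. Then $\varrho$ is a polynomial.
   Context: A neural network with architecture $S=(N_0,\dots,N_L)$ ($N_0=d$) is a family $\Phi=((A_\ell,b_\ell))_{\ell=1}^L$, $A_\ell\in\mathbb{R}^{N_\ell\times N_{\ell-1}}$, $b_\ell\in\mathbb{R}^{N_\ell}$; $\mathcal{NN}(S)$ is the set of these. $\mathrm{R}_\varrho^\Omega(\Phi):\Omega\to\mathbb{R}^{N_L}$, $x\mapsto x_L$, where $x_0=x$, $x_\ell=\varrho(A_\ell x_{\ell-1}+b_\ell)$ for $1\le\ell\le L-1$ (componentwise), $x_L=A_Lx_{L-1}+b_L$; $\mathcal{RNN}_\varrho^\Omega(S)=\{\mathrm{R}_\varrho^\Omega(\Phi):\Phi\in\mathcal{NN}(S)\}$. *)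

From HB Require Import structures.
From mathcomp Require Import all_boot all_order all_algebra.
From mathcomp Require Import all_classical all_reals all_analysis.
Set Implicit Arguments. Unset Strict Implicit. Unset Printing Implicit Defensive.
Import Order.TTheory GRing.Theory Num.Theory.
Import numFieldNormedType.Exports.
Local Open Scope classical_set_scope.
Local Open Scope ring_scope.

(* A network with input dimension n0 and layer widths Ns = [:: N_1; ...; N_L]:
   a list of pairs (A_l, b_l), A_l : 'M_(N_l, N_{l-1}), b_l : 'cV_(N_l). *)
Fixpoint NN (R : realType) (n0 : nat) (Ns : seq nat) : Type :=
  match Ns with
  | [::] => unit
  | n1 :: Ns' => ('M[R]_(n1, n0) * 'cV[R]_n1) * NN R n1 Ns'
  end.

Fixpoint realize (R : realType) (rho : R -> R) (n0 : nat) (Ns : seq nat)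
  : NN R n0 Ns -> 'cV[R]_n0 -> 'cV[R]_(last n0 Ns) :=
  match Ns return NN R n0 Ns -> 'cV[R]_n0 -> 'cV[R]_(last n0 Ns) with
  | [::] => fun _ x => x
  | n1 :: Ns' => fun Phi x =>
      let y := Phi.1.1 *m x + Phi.1.2 in
      realize rho Phi.2 (if nilp Ns' then y else map_mx rho y)
  end.

(* RNN_rho^Omega(S) contains infinitely many linearly independent functions:
   there is a sequence of realizations whose restrictions to Omega are
   linearly independent (every finite initial segment is independent). *)
Definition inf_lin_indep_realizations (R : realType) (rho : R -> R)
  (d : nat) (Ns : seq nat) (Omega : set 'cV[R]_d) : Prop :=
  exists Phi : nat -> NN R d Ns,
    forall (n : nat) (c : 'I_n -> R),
      (forall x, Omega x -> \sum_(i < n) c i *: realize rho (Phi i) x = 0) ->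
      forall i, c i = 0.

Definition is_polynomial (R : realType) (rho : R -> R) : Prop :=
  exists p : {poly R}, forall x, rho x = p.[x].

From HB Require Import structures.
From mathcomp Require Import all_boot all_order all_algebra.
From mathcomp Require Import all_classical all_reals all_analysis.
From mathcomp Require Import ring lra qpoly.
Set Implicit Arguments. Unset Strict Implicit. Unset Printing Implicit Defensive.
Import Order.TTheory GRing.Theory Num.Theory.
Import numFieldNormedType.Exports.
Local Open Scope classical_set_scope.
Local Open Scope ring_scope.

(* If the realizations span a finite-dimensional space on Omega, then along a
   segment in the interior of Omega one finds finitely many distinct nodes
   s_j and weights mu_j, not all zero, such that sum_j mu_j F(s_j) = 0 for
   every realization F.  Networks with one active neuron per layer realize
   t |-> H(w t + b) for every scalar chain
   H(t) = rho(a_k rho(... rho(a_1 rho(t) + b_1) ...) + b_k), so H satisfies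
   sum_j mu_j H(w s_j + b) = 0 for all w, b.  Averaging this relation over w
   shows that H is C^1 and that H' satisfies the relation with weights
   mu_j s_j; choosing K with sum_j mu_j s_j^K <> 0 (Vandermonde), induction
   on K shows that H is a polynomial of degree < K.  Finally the outer layers
   are peeled off: if rho(a u(t) + x0) is a polynomial of bounded degree for
   every a, so is the limit of its difference quotients in a, namely
   u(t) rho'(x0). *)

Section ScalarNetworks.
Variables (R : realType) (rho : R -> R).

Definition scalar_layer (wb : R * R) (n1 n0 : nat) : 'M[R]_(n1, n0) * 'cV[R]_n1 :=
  (\matrix_(i, j) if (i == 0 :> nat) && (j == 0 :> nat) then wb.1 else 0,
   \col_i if i == 0 :> nat then wb.2 else 0).

(* Missing pairs default to (1, 0), so when [size ws = (size Ns).-1] the last,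
   affine, layer just forwards the first coordinate. *)
Fixpoint scalar_net (ws : seq (R * R)) (n0 : nat) (Ns : seq nat) : NN R n0 Ns :=
  match Ns return NN R n0 Ns with
  | [::] => tt
  | n1 :: Ns' => (scalar_layer (head (1, 0) ws) n1 n0, scalar_net (behead ws) n1 Ns')
  end.

Definition hidden_chain (ws : seq (R * R)) (t : R) : R :=
  foldl (fun s wb => rho (wb.1 * s + wb.2)) t ws.

Lemma scalar_layerE wb n1 n0 (x : 'cV_n0) (i : 'I_n1) (j : 'I_n0) :
  i = 0 :> nat -> j = 0 :> nat ->
  ((scalar_layer wb n1 n0).1 *m x + (scalar_layer wb n1 n0).2) i 0 = wb.1 * x j 0 + wb.2.
Proof.
move=> /eqP i0 /eqP j0; rewrite !mxE (bigD1 j) //= !mxE i0 j0 /= big1 ?addr0 // => k.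
by rewrite -val_eqE /= (eqP j0) !mxE i0 /= => /negPf ->; rewrite mul0r.
Qed.

Lemma realize_scalar_net Ns : all (fun n => 0 < n)%N Ns ->
  forall ws n0 x (i : 'I_(last n0 Ns)) (j : 'I_n0),
  size ws = (size Ns).-1 -> i = 0 :> nat -> j = 0 :> nat ->
  realize rho (scalar_net ws n0 Ns) x i 0 = hidden_chain ws (x j 0).
Proof.
elim: Ns => [|n1 Ns IH] /=.
  by move=> _ [|//] n0 x i j _ i0 j0; congr (x _ 0); apply: val_inj; rewrite /= i0 j0.
case/andP=> n1_gt0 Ns_gt0 ws n0 x i j.
case: Ns IH Ns_gt0 i => [|n2 Ns] IH Ns_gt0 i /=.
  by case: ws => [|//] _ i0 j0; rewrite (scalar_layerE _ _ i0 j0) mul1r addr0.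
case: ws => [|wb ws] //= [size_ws] i0 j0.
by rewrite (IH Ns_gt0 ws n1 _ i (Ordinal n1_gt0)) //= mxE (scalar_layerE _ _ _ j0).
Qed.

Lemma hidden_chain_rcons ws wb t :
  hidden_chain (rcons ws wb) t = rho (wb.1 * hidden_chain ws t + wb.2).
Proof. by rewrite /hidden_chain foldl_rcons. Qed.

Lemma continuous_hidden_chain ws : continuous rho -> continuous (hidden_chain ws).
Proof.
move=> rho_cont; elim/last_ind: ws => [|ws wb IH] t; first exact: cvg_id.
rewrite /continuous_at; under [X in X @ _]funext do rewrite hidden_chain_rcons.
rewrite hidden_chain_rcons; apply: continuous_comp; last exact: rho_cont.
by apply: continuousD; [apply: continuousM; [exact: cvg_cst|exact: IH]|exact: cvg_cst].
Qed.

End ScalarNetworks.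

Section FiniteSpan.
Variables (K : fieldType) (T U : Type) (V : lmodType K).
Variables (F : T -> U -> V) (D : set U).

Definition in_span (s : seq T) (P : T) :=
  exists a : nat -> K, forall x, D x -> F P x = \sum_(i < size s) a i *: F (nth P s i) x.

Fixpoint greedy_seq (next : seq T -> T) (k : nat) : seq T :=
  if k is k'.+1 then rcons (greedy_seq next k') (next (greedy_seq next k')) else [::].

Lemma size_greedy_seq next k : size (greedy_seq next k) = k.
Proof. by elim: k => //= k IH; rewrite size_rcons IH. Qed.

Lemma nth_greedy_seq next k i P :
  (i < k)%N -> nth P (greedy_seq next k) i = next (greedy_seq next i).
Proof.
elim: k => // k IH; rewrite ltnS leq_eqVlt => /orP[/eqP ->|ik] /=.
  by rewrite nth_rcons size_greedy_seq ltnn eqxx.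
by rewrite nth_rcons size_greedy_seq ik IH.
Qed.

(* If no finite family spans, choosing each new element outside the span of
   the previous ones yields an independent sequence. *)
Lemma finite_spanning_seq :
  ~ (exists Phi : nat -> T, forall n (c : 'I_n -> K),
       (forall x, D x -> \sum_(i < n) c i *: F (Phi i) x = 0) -> forall i, c i = 0) ->
  exists s, forall P, in_span s P.
Proof.
move=> no_indep; apply: contrapT => no_span.
have next_spec s : exists P, ~ in_span s P.
  by apply/existsNP => all_span; apply: no_span; exists s.
pose next s := projT1 (cid (next_spec s)).
have next_new s : ~ in_span s (next s) := projT2 (cid (next_spec s)).
apply: no_indep; exists (fun k => next (greedy_seq next k)).
elim=> [|n IH] c c_rel i; first by case: i.
pose c' (j : 'I_n) := c (widen_ord (leqnSn n) j).
have c_rel' x : D x ->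
    \sum_(j < n) c' j *: F (next (greedy_seq next j)) x
    + c ord_max *: F (next (greedy_seq next n)) x = 0.
  by move=> /c_rel; rewrite big_ord_recr.
have c_max : c ord_max = 0.
  apply: contrapT => /eqP c_neq0; apply: (next_new (greedy_seq next n)).
  exists (fun j => - c (inord j) / c ord_max) => x Dx; rewrite size_greedy_seq.
  apply: (scalerI c_neq0); move/eqP: (c_rel' x Dx); rewrite addrC addr_eq0 => /eqP ->.
  rewrite scaler_sumr -sumrN; apply: eq_bigr => j _.
  rewrite scalerA mulrC divfK // nth_greedy_seq // scaleNr.
  rewrite (_ : inord j = widen_ord (leqnSn n) j) //.
  by apply: val_inj; rewrite /= inordK // leqW.
have c'0 j : c' j = 0.
  by apply: IH => x Dx; have := c_rel' x Dx; rewrite c_max scale0r addr0.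
have [/eqP i_max|i_ne] := boolP ((i : nat) == n).
  by rewrite -c_max; congr c; apply: val_inj.
have i_lt : (i < n)%N by rewrite ltn_neqAle i_ne -ltnS ltn_ord.
by rewrite -(c'0 (Ordinal i_lt)); congr c; apply: val_inj.
Qed.

End FiniteSpan.

Lemma wide_mx_kernel (K : fieldType) m (G : 'M[K]_(m, m.+1)) :
  exists2 v : 'cV_m.+1, (exists i, v i 0 != 0) & G *m v = 0.
Proof.
have coker_neq0 : cokermx G != 0.
  by rewrite -mxrank_eq0 mxrank_coker subn_eq0 -ltnNge ltnS rank_leq_row.
case: (pickP (fun ij : 'I_m.+1 * 'I_m.+1 => cokermx G ij.1 ij.2 != 0)) => [[i j] Cij|C0].
  exists (col j (cokermx G)); first by exists i; rewrite mxE.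
  by rewrite colE mulmxA mulmx_coker mul0mx.
by case/eqP: coker_neq0; apply/matrixP => i j; rewrite [RHS]mxE; exact/eqP/negbFE/(C0 (i, j)).
Qed.

Lemma finite_span_annihilator (K : fieldType) (T U : Type) (f : T -> U -> K)
    (s : seq T) (pts : nat -> U) :
  (forall P, exists a : nat -> K,
     forall j, f P (pts j) = \sum_(i < size s) a i * f (nth P s i) (pts j)) ->
  exists mu : 'I_(size s).+1 -> K,
    (exists j, mu j != 0) /\ forall P, \sum_j mu j * f P (pts j) = 0.
Proof.
move=> s_span.
pose G := \matrix_(i < size s, j < (size s).+1) f (tnth (in_tuple s) i) (pts j).
have [v v_neq0 Gv] := wide_mx_kernel G.
exists (fun j => v j 0); split => // P; have [a Pa] := s_span P.
under eq_bigr => j _ do rewrite Pa mulr_sumr.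
rewrite exchange_big /= big1 // => i _.
transitivity (a i * (G *m v) i 0); last by rewrite Gv mxE mulr0.
rewrite mxE mulr_sumr; apply: eq_bigr => j _.
by rewrite mxE (tnth_nth P) /=; ring.
Qed.

Lemma nonvanishing_moment (K : fieldType) n (sig mu : 'I_n -> K) (j : 'I_n) :
  injective sig -> mu j != 0 -> exists2 k, (k < n)%N & \sum_i mu i * sig i ^+ k != 0.
Proof.
move=> sig_inj mu_j; apply: contrapT => no_moment; move/eqP: mu_j; apply.
have moments0 k : (k < n)%N -> \sum_i mu i * sig i ^+ k = 0.
  by move=> k_lt; apply/eqP/negPn/negP => moment_neq0; apply: no_moment; exists k.
pose V := Vandermonde n (\row_i sig i).
have V_unit : V \in unitmx.
  rewrite unitmxE det_Vandermonde unitfE; apply/prodf_neq0 => i _.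
  apply/prodf_neq0 => k /= ik; rewrite !mxE subr_eq0; apply/eqP => /sig_inj ki.
  by move: ik; rewrite ki ltnn.
have Vmu : V *m \col_i mu i = 0.
  apply/matrixP => k l; rewrite !mxE -[RHS](moments0 k) //.
  by apply: eq_bigr => i _; rewrite !mxE mulrC.
by have /matrixP/(_ j 0) := mulKmx V_unit (\col_i mu i); rewrite Vmu mulmx0 !mxE.
Qed.

Section RealToolkit.
Variable R : realType.
Implicit Types f g : R -> R.

Definition diffq f (e x : R) : R := if e == 0 then 0 else e^-1 * (f (x + e) - f x).

Lemma is_derive_comp_affine f (c b w df : R) :
  is_derive (w * c + b) 1 f df -> is_derive w 1 (fun w => f (w * c + b)) (df * c).
Proof.
move=> f_der; have affine_der : is_derive w 1 (fun w => w * c + b) c.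
  apply: (is_derive_eq (is_deriveD (is_deriveM (is_derive_id w 1) (is_derive_cst c w 1))
                                   (is_derive_cst b w 1))).
  by rewrite /= addr0 scaler0 add0r /GRing.scale /= mulr1.
exact: (@is_derive1_comp R f (fun w => w * c + b) w df c f_der affine_der).
Qed.

Lemma is_derive_shift_arg f (e x df : R) :
  is_derive (x + e) 1 f df -> is_derive x 1 (fun x => f (x + e)) df.
Proof.
move=> f_der; apply: (is_derive_eq (@is_derive1_comp R f (shift e) x df 1 f_der _)).
  exact: is_derive_shift.
by rewrite mulr1.
Qed.

Lemma is_derive_diffq f g (e x : R) :
  is_derive x 1 f (g x) -> is_derive (x + e) 1 f (g (x + e)) ->
  is_derive x 1 (diffq f e) (diffq g e x).
Proof.
rewrite /diffq; case: (e == 0) => [_ _|fx_der fxe_der]; first exact: is_derive_cst.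
by apply: is_deriveZ; apply: is_deriveB => //; exact: is_derive_shift_arg.
Qed.

Lemma continuous_diffq f e : continuous f -> continuous (diffq f e).
Proof.
move=> f_cont x; rewrite /diffq; case: (e == 0); first exact: cvg_cst.
apply: cvgMl_tmp; apply: cvgB; last exact: f_cont.
by apply: continuous_comp; [apply: cvgD; [exact: cvg_id|exact: cvg_cst]|exact: f_cont].
Qed.

Lemma is_derive_primitive f (a y : R) : continuous f -> a < y ->
  is_derive y 1 (fun z => \int[lebesgue_measure]_(t in `[a, z]) f t) (f y).
Proof.
move=> f_cont ay.
have [|//|y_der <-] := @continuous_FTC1_closed R f a y (y + 1) _ _ ay (f_cont y).
- by rewrite ltrDl.
- apply: continuous_compact_integrable; first exact: segment_compact.
  exact: continuous_subspaceT.
by apply: DeriveDef; rewrite // -derive1E.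
Qed.

Lemma is_derive0_itv_eq f (a b : R) : a <= b ->
  (forall w, a <= w <= b -> is_derive w 1 f 0) -> f b = f a.
Proof.
move=> ab f_der; apply/eqP; rewrite -subr_eq0.
have f_open (w : R) : w \in `]a, b[ -> is_derive w 1 f ((fun=> 0 : R) w).
  by rewrite in_itv /= => /andP[? ?]; apply: f_der; rewrite !ltW.
have f_cont : {within `[a, b], continuous f}.
  apply: continuous_in_subspaceT => w; rewrite inE /= in_itv /= => wab.
  by have [/derivable1_diffP/differentiable_continuous] := f_der w wab.
by have [w _ ->] := MVT_segment ab f_open f_cont; rewrite mul0r.
Qed.

Lemma cvg_sum (T : Type) (F : set_system T) (FF : Filter F) n
    (f : 'I_n -> T -> R) (l : 'I_n -> R) :
  (forall i, f i x @[x --> F] --> l i) -> \sum_i f i x @[x --> F] --> \sum_i l i.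
Proof. by move=> f_cvg; apply: cvg_big => //; exact: add_continuous. Qed.

End RealToolkit.

Definition annihilates (R : pzRingType) n (sig mu : 'I_n -> R) (h : R -> R) :=
  forall w b, \sum_j mu j * h (w * sig j + b) = 0.

Definition poly_size_le (R : nzRingType) (n : nat) (f : R -> R) :=
  exists p : {poly R}, (size p <= n)%N /\ f =1 horner p.

Section AnnihilatedRegularity.
Variables (R : realType) (n : nat) (dl mu : 'I_n -> R) (h : R -> R).
Hypothesis h_cont : continuous h.
Hypothesis h_ann : annihilates dl mu h.

Let zero_mass : R := \sum_(j | dl j == 0) mu j.
Let spread : R := \sum_j `|dl j|.

Let dl_le_spread j : `|dl j| <= spread.
Proof. by rewrite /spread (bigD1 j) //= lerDl sumr_ge0. Qed.

Let spread_ge0 : 0 <= spread.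
Proof. exact: sumr_ge0. Qed.

(* Integrating the relation in w over [0, 1]: Theta is a w-primitive of the
   relation, hence constant. *)
Lemma annihilated_average (G : R -> R) (a x : R) :
  (forall z, a < z -> is_derive z 1 G (h z)) -> a + spread < x ->
  zero_mass * h x + \sum_j mu j * diffq G (dl j) x = 0.
Proof.
move=> G_der ax.
pose E j w := if dl j == 0 then w * h x else (dl j)^-1 * (G (w * dl j + x) - G x).
pose Theta w := \sum_j mu j * E j w.
have in_domain (j : 'I_n) (w : R) : 0 <= w <= 1 -> a < w * dl j + x.
  move=> /andP[w_ge0 w_le1].
  have : `|w * dl j| <= spread by rewrite normrM ger0_norm // (le_trans (ler_piMl _ w_le1)).
  by move/lerNnormlW; lra.
have E_der (j : 'I_n) (w : R) : 0 <= w <= 1 -> is_derive w 1 (E j) (h (w * dl j + x)).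
  move=> w01; rewrite /E; have [dl0|dl_neq0] := eqVneq (dl j) 0.
    rewrite dl0 mulr0 add0r.
    apply: (is_derive_eq (is_deriveM (is_derive_id w 1) (is_derive_cst (h x) w 1))).
    by rewrite /= scaler0 add0r /GRing.scale /= mulr1.
  apply: (is_derive_eq (is_deriveZ _ (is_deriveB
    (is_derive_comp_affine (G_der _ (in_domain j w w01))) (is_derive_cst (G x) w 1)))).
  by rewrite subr0 /GRing.scale /= mulrCA mulVf // mulr1.
have Theta_const : Theta 1 = Theta 0.
  apply: is_derive0_itv_eq => // w w01; rewrite -(h_ann w x) /Theta -fct_sumE.
  by apply: is_derive_sum => j; apply: is_deriveZ; exact: E_der.
have Theta0 : Theta 0 = 0.
  by rewrite /Theta big1 // => j _; rewrite /E; case: ifP; rewrite ?mul0r ?add0r ?subrr ?mulr0.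
have Theta1 : Theta 1 = zero_mass * h x + \sum_j mu j * diffq G (dl j) x.
  rewrite /zero_mass big_mkcond mulr_suml -big_split /Theta /=; apply: eq_bigr => j _.
  by rewrite /E /diffq !mul1r (addrC (dl j)); case: ifP; rewrite ?mul0r ?mulr0 ?addr0 ?add0r.
by rewrite -Theta1 Theta_const Theta0.
Qed.

Lemma annihilated_derivable (x : R) : zero_mass != 0 ->
  is_derive x 1 h (- zero_mass^-1 * \sum_j mu j * diffq h (dl j) x).
Proof.
move=> mass_neq0; pose a := x - 1 - spread.
pose G z := \int[lebesgue_measure]_(t in `[a, z]) h t.
have G_der z : a < z -> is_derive z 1 G (h z) by exact: is_derive_primitive.
have h_near : \forall y \near x, - zero_mass^-1 * \sum_j mu j * diffq G (dl j) y = h y.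
  have : a + spread < x by rewrite /a; lra.
  move=> /lt_nbhsr; apply: filterS => y /(annihilated_average G_der) /eqP.
  by rewrite addrC addr_eq0 => /eqP ->; rewrite mulNr mulrN opprK mulKf.
apply: near_eq_is_derive h_near _; apply: is_deriveZ; rewrite -fct_sumE.
apply: is_derive_sum => j; apply: is_deriveZ; apply: is_derive_diffq; apply: G_der.
  by rewrite /a; have := spread_ge0; lra.
by rewrite /a; have := lerNnormlW (dl_le_spread j); lra.
Qed.

Lemma annihilated_C1 : zero_mass != 0 ->
  exists h' : R -> R, continuous h' /\ forall x : R, is_derive x 1 h (h' x).
Proof.
move=> mass_neq0; exists (fun x => - zero_mass^-1 * \sum_j mu j * diffq h (dl j) x).
split; last by move=> x; exact: annihilated_derivable.
move=> x; apply: cvgMl_tmp; apply: cvg_sum => j; apply: cvgMl_tmp.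
exact: continuous_diffq.
Qed.

End AnnihilatedRegularity.

Lemma poly_primitive (R : numFieldType) (p : {poly R}) :
  exists P : {poly R}, P^`() = p /\ (size P <= (size p).+1)%N.
Proof.
exists (\poly_(i < (size p).+1) (if i is i'.+1 then p`_i' / i'.+1%:R else 0)).
split; last exact: size_poly.
apply/polyP => i; rewrite coef_deriv coef_poly.
case: ltnP => [_|size_le]; first by rewrite -[LHS]mulr_natr divfK // pnatr_eq0.
by rewrite nth_default ?mul0rn // -ltnS.
Qed.

Lemma poly_of_poly_derivative (R : realType) (h : R -> R) (p : {poly R}) :
  (forall x : R, is_derive x 1 h p.[x]) -> poly_size_le (size p).+1 h.
Proof.
move=> h_der; have [P [P_der size_P]] := poly_primitive p.
have diff_der (x : R) : is_derive x 1 (fun y => h y - P.[y]) 0.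
  by apply: (is_derive_eq (is_deriveB (h_der x) (is_derive_poly P x))); rewrite P_der subrr.
exists (P + (h 0 - P.[0])%:P); split.
  by rewrite (leq_trans (size_polyD _ _)) // geq_max size_P (leq_trans (size_polyC_leq1 _)).
by move=> x; rewrite hornerD hornerC -(@is_derive_0_is_cst R _ x 0 diff_der) addrC subrK.
Qed.

Section AnnihilatedPoly.
Variables (R : realType) (n : nat) (sig : 'I_n -> R).
Hypothesis sig_inj : injective sig.

Lemma annihilates_derive mu h h' : annihilates sig mu h ->
  (forall x : R, is_derive x 1 h (h' x)) -> annihilates sig (fun j => mu j * sig j) h'.
Proof.
move=> h_ann h_der w b.
have W_der : is_derive w 1 (fun w => \sum_j mu j * h (w * sig j + b))
    (\sum_j mu j * (h' (w * sig j + b) * sig j)).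
  rewrite -fct_sumE; apply: is_derive_sum => j.
  by apply: is_deriveZ; exact: is_derive_comp_affine.
have W0 : (fun w => \sum_j mu j * h (w * sig j + b)) = cst 0.
  by apply/funext => w'; exact: h_ann.
rewrite W0 in W_der; have := @derive_val _ _ _ _ _ _ _ W_der.
rewrite derive_cst => W'0.
by rewrite [RHS]W'0; apply: eq_bigr => j _; rewrite mulrAC mulrA.
Qed.

(* The K-th moment of mu drops to the (K-1)-th moment of the weights mu_j s_j
   of the derivative relation. *)
Lemma annihilated_poly K : forall mu h, continuous h -> annihilates sig mu h ->
  \sum_j mu j * sig j ^+ K != 0 -> poly_size_le K h.
Proof.
elim: K => [|K IH] mu h h_cont h_ann moment_neq0.
  exists 0; split => [|x]; first by rewrite size_poly0.
  have /eqP := h_ann 0 x; rewrite horner0.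
  under eq_bigr => j _ do rewrite mul0r add0r.
  rewrite -mulr_suml mulf_eq0 => /orP[|/eqP //].
  by under eq_bigr => j _ do rewrite -[mu j]mulr1 -(expr0 (sig j)); rewrite (negPf moment_neq0).
have [k mu_k] : exists k, mu k != 0.
  case: (pickP (fun j => mu j != 0)) => [k mu_k|mu0]; first by exists k.
  move: moment_neq0; rewrite big1 ?eqxx // => j _.
  by have /negbFE/eqP -> := mu0 j; rewrite mul0r.
have ann_k : annihilates (fun j => sig j - sig k) mu h.
  move=> w b; rewrite -[RHS](h_ann w (b - w * sig k)).
  by apply: eq_bigr => j _; congr (_ * h _); ring.
have mass_k : \sum_(j | sig j - sig k == 0) mu j = mu k.
  by rewrite (eq_bigl (pred1 k)) ?big_pred1_eq // => j; rewrite subr_eq0 (inj_eq sig_inj).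
rewrite -mass_k in mu_k; have [h' [h'_cont h_der]] := annihilated_C1 h_cont ann_k mu_k.
have moment' : \sum_j (mu j * sig j) * sig j ^+ K != 0.
  by under eq_bigr => j _ do rewrite -mulrA -exprS.
have [p [size_p h'_p]] := IH _ _ h'_cont (annihilates_derive h_ann h_der) moment'.
have [q [size_q h_q]] : poly_size_le (size p).+1 h.
  by apply: poly_of_poly_derivative => x; rewrite -h'_p.
by exists q; split; first exact: leq_trans size_q _.
Qed.

End AnnihilatedPoly.

Section PolynomialLimits.
Variable R : realType.

Lemma poly_limit (T : Type) (F : set_system T) {FF : ProperFilter F} (D : nat)
    (f : T -> R -> R) (g : R -> R) :
  (\forall a \near F, poly_size_le D.+1 (f a)) ->
  (forall s, f a s @[a --> F] --> g s) -> poly_size_le D.+1 g.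
Proof.
move=> f_poly f_cvg; pose x i : R := i%:R.
have x_inj : injective x by move=> i j /eqP; rewrite eqr_nat => /eqP.
pose L i : {poly R} := tnth (@lagrange R D.+1 x) i.
have interpolate s : \forall a \near F, \sum_(i < D.+1) f a (x i) * (L i).[s] = f a s.
  apply: filterS f_poly => a [p [size_p f_p]].
  rewrite [RHS]f_p {1}(lagrange_gen (ltn0Sn D) x_inj size_p) horner_sum.
  by apply: eq_bigr => i _; rewrite hornerM hornerC f_p.
exists (\sum_(i < D.+1) g (x i) *: L i); split.
  rewrite (leq_trans (size_sum _ _ _)) //; apply/bigmax_leqP => i _.
  by rewrite (leq_trans (size_scale_leq _ _)) // size_lagrange_.
move=> s; rewrite horner_sum; under eq_bigr => i _ do rewrite hornerZ.
have sum_cvg : \sum_(i < D.+1) f a (x i) * (L i).[s] @[a --> F] -->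
               \sum_(i < D.+1) g (x i) * (L i).[s].
  by apply: cvg_sum => i; apply: cvgMr_tmp.
have f_to_sum : f a s @[a --> F] --> \sum_(i < D.+1) g (x i) * (L i).[s].
  by apply: cvg_trans sum_cvg; apply: near_eq_cvg; exact: interpolate.
exact: cvg_unique _ (f_cvg s) f_to_sum.
Qed.

Lemma cvg_difference_quotient (rho : R -> R) (x0 c : R) : derivable rho x0 1 ->
  a^-1 * (rho (a * c + x0) - rho x0) @[a --> 0^'] --> c * derive1 rho x0.
Proof.
move=> rho_der; have rho_diff : differentiable rho x0 by apply/derivable1_diffP.
have -> : c * derive1 rho x0 = 'D_c rho x0.
  rewrite derive1E !deriveE // -[in RHS](mulr1 c).
  by rewrite (_ : c * 1 = c *: (1 : R)) // linearZ.
exact: (diff_derivable rho_diff).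
Qed.

Lemma poly_of_poly_outer (rho u : R -> R) (x0 : R) (D : nat) :
  derivable rho x0 1 -> derive1 rho x0 != 0 ->
  (forall a, poly_size_le D.+1 (fun s => rho (a * u s + x0))) -> poly_size_le D.+1 u.
Proof.
move=> rho_der rho'_neq0 outer_poly.
pose f a s := a^-1 * (rho (a * u s + x0) - rho x0).
have f_poly : \forall a \near 0^', poly_size_le D.+1 (f a).
  near=> a; have [p [size_p p_eq]] := outer_poly a.
  exists (a^-1 *: (p - (rho x0)%:P)); split.
    rewrite (leq_trans (size_scale_leq _ _)) // (leq_trans (size_polyD _ _)) //.
    by rewrite geq_max size_p size_polyN (leq_trans (size_polyC_leq1 _)).
  by move=> s; rewrite hornerZ hornerD hornerN hornerC -p_eq.
have [q [size_q q_eq]] :=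
  poly_limit f_poly (fun s => cvg_difference_quotient (c := u s) rho_der).
exists ((derive1 rho x0)^-1 *: q); split; first exact: leq_trans (size_scale_leq _ _) size_q.
by move=> s; rewrite hornerZ -q_eq mulrC mulfK.
Unshelve. all: by end_near.
Qed.

End PolynomialLimits.

Lemma poly_of_poly_hidden_chains (R : realType) (rho : R -> R) (x0 : R) (D k : nat) :
  derivable rho x0 1 -> derive1 rho x0 != 0 ->
  (forall ws, size ws = k -> poly_size_le D.+1 (hidden_chain rho ws \o rho)) ->
  poly_size_le D.+1 rho.
Proof.
move=> rho_der rho'_neq0; elim: k => [|k IH] chains_poly; first exact: chains_poly [::] _.
apply: IH => ws size_ws; apply: poly_of_poly_outer rho_der rho'_neq0 _ => a.
have := chains_poly (rcons ws (a, x0)); rewrite size_rcons size_ws => /(_ erefl).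
by case=> p [size_p p_eq]; exists p; split => // t; rewrite -p_eq /= hidden_chain_rcons.
Qed.

Lemma nbhs_line (R : realType) (V : normedModType R) (A : set V) (p e : V) :
  nbhs p A -> exists2 r : R, 0 < r & forall t, `|t| < r -> A (p + t *: e).
Proof.
move=> A_p; have line_cont : (fun t : R => p + t *: e) @ (0 : R) --> p.
  rewrite -[X in _ --> X]addr0 -(scale0r e).
  by apply: cvgD; [exact: cvg_cst|apply: cvgZr_tmp; exact: cvg_id].
have /nbhs_ballP[r r_gt0 r_ball] := line_cont _ A_p.
by exists r => // t t_lt; apply: r_ball; rewrite /ball /= sub0r normrN.
Qed.

Lemma finite_rank_annihilator (R : realType) (rho : R -> R) d Ns (Omega : set 'cV[R]_d)
    (pts : nat -> 'cV[R]_d) (i : 'I_(last d Ns)) :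
  ~ inf_lin_indep_realizations rho Ns Omega -> (forall j, Omega (pts j)) ->
  exists n (mu : 'I_n -> R), (exists j, mu j != 0) /\
    forall Phi, \sum_(j < n) mu j * realize rho Phi (pts j) i 0 = 0.
Proof.
move=> no_indep Omega_pts; have [s s_span] := finite_spanning_seq no_indep.
have [|mu mu_ann] := @finite_span_annihilator R _ _ (fun Phi x => realize rho Phi x i 0) s pts.
  move=> Phi; have [a Phi_a] := s_span Phi; exists a => j.
  by rewrite Phi_a // summxE; apply: eq_bigr => k _; rewrite mxE.
by exists (size s).+1, mu.
Qed.

Lemma hidden_chains_annihilated (R : realType) (rho : R -> R) d Ns (Omega : set 'cV[R]_d) :
  (0 < d)%N -> all (fun n => 0 < n)%N Ns -> interior Omega !=set0 ->
  ~ inf_lin_indep_realizations rho Ns Omega ->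
  exists n (sig mu : 'I_n -> R), [/\ injective sig, exists j, mu j != 0 &
    forall ws, size ws = (size Ns).-1 -> \sum_j mu j * hidden_chain rho ws (sig j) = 0].
Proof.
move=> d_gt0 Ns_gt0 [p Omega_p] no_indep; pose id0 : 'I_d := Ordinal d_gt0.
have last_gt0 : (0 < last d Ns)%N.
  by apply: (allP (_ : all (fun n => 0 < n)%N (d :: Ns))); rewrite ?mem_last //= d_gt0.
have [r r_gt0 line_in] := nbhs_line (delta_mx id0 0) Omega_p.
pose t j : R := r / j.+2%:R.
have t_lt j : `|t j| < r.
  by rewrite ger0_norm ?divr_ge0 ?ltW // ltr_pdivrMr // ltr_pMr // ltr1n.
have [n [mu [mu_neq0 mu_ann]]] :=
  finite_rank_annihilator (Ordinal last_gt0) no_indep (fun j => line_in _ (t_lt j)).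
exists n, (fun j : 'I_n => p id0 0 + t j), mu; split => // [j k|ws size_ws].
  move=> /addrI /(mulfI (lt0r_neq0 r_gt0)) /invr_inj /eqP.
  by rewrite eqr_nat !eqSS => /eqP/val_inj.
rewrite -[RHS](mu_ann (scalar_net ws d Ns)); apply: eq_bigr => j _; congr (_ * _).
by rewrite (realize_scalar_net rho Ns_gt0 _ (j := id0)) // !mxE eqxx mulr1.
Qed.

Theorem propositionC6 (R : realType) (d : nat) (Ns : seq nat)
  (rho : R -> R) (x0 : R) (Omega : set 'cV[R]_d) :
  (0 < d)%N -> all (fun n => 0 < n)%N Ns -> (2 <= size Ns)%N ->
  continuous rho ->
  derivable rho x0 1 -> derive1 rho x0 != 0 ->
  interior Omega !=set0 ->
  ~ inf_lin_indep_realizations rho Ns Omega ->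
  is_polynomial rho.
Proof.
move=> d_gt0 Ns_gt0 two_le_L rho_cont rho_der rho'_neq0 int_Omega no_indep.
have [n [sig [mu [sig_inj [j0 mu_j0] mu_ann]]]] :=
  hidden_chains_annihilated d_gt0 Ns_gt0 int_Omega no_indep.
have [K K_lt moment_neq0] := nonvanishing_moment sig_inj mu_j0.
suff [q [_ rho_q]] : poly_size_le n.+1 rho by exists q.
apply: (poly_of_poly_hidden_chains (k := (size Ns).-2) rho_der rho'_neq0) => ws size_ws.
have chain_ann : annihilates sig mu (hidden_chain rho ws \o rho).
  move=> w b; rewrite -[RHS](mu_ann ((w, b) :: ws)) //=.
  by rewrite size_ws; case: (size Ns) two_le_L => [|[|m]].
have chain_cont : continuous (hidden_chain rho ws \o rho).
  by move=> y; apply: continuous_comp; [exact: rho_cont|exact: continuous_hidden_chain].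
have [q [size_q q_eq]] := annihilated_poly sig_inj chain_cont chain_ann moment_neq0.
by exists q; split; first exact: leq_trans size_q (leqW (ltnW K_lt)).
Qed.
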